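(* Let $M$ be a smooth manifold, let $\nabla$ be an affine connection on $M$ and let $(\hat J_1,\hat J_2,\hat J_3)$ be a generalized almost quaternionic structure on $M$. Then $\hat J_1,\hat J_2,\hat J_3$ are $\nabla$-integrable if and only if the generalized Obata connection $D$ is torsion-free, i.e. $D_\sigma\tau-D_\tau\sigma-[\sigma,\tau]_\nabla=0$ for all $\sigma,\tau$.
   Context: A generalized almost quaternionic structure is a triple of endomorphisms $\hat J_1,\hat J_2,\hat J_3$ of $TM\oplus T^*M$ with $\hat J_i^2=-I$, $\hat J_1\hat J_2=-\hat J_2\hat J_1$, $\hat J_3=\hat J_1\hat J_2$. The $\nabla$-bracket: $[X+\eta,Y+\beta]_\nabla:=[X,Y]+\nabla_X\beta-\nabla_Y\eta$. $N^\nabla_{\hat K}(\sigma,\tau):=[\hat K\sigma,\hat K\tau]_\nabla-\hat K[\hat K\sigma,\tau]_\nabla-\hat K[\sigma,\hat K\tau]_\nabla+\hat K^2[\sigma,\tau]_\nabla$; $\hat K$ is $\nabla$-integrable if $N^\nabla_{\hat K}=0$. The generalized Obata connection is $D_\sigma\tau=\frac1{12}\Big\{\sum_{(\alpha,\beta,\gamma)}\hat J_\alpha([\hat J_\beta\sigma,\hat J_\gamma\tau]_\nabla+[\hat J_\beta\tau,\hat J_\gamma\sigma]_\nabla)+2\sum_{\alpha=1}^3\hat J_\alpha([\hat J_\alpha\sigma,\tau]_\nabla+[\hat J_\alpha\tau,\sigma]_\nabla)-\sum_{\alpha=1}^3N^\nabla_{\hat J_\alpha}(\sigma,\tau)\Big\}+\frac12[\sigma,\tau]_\nabla$,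 $(\alpha,\beta,\gamma)$ over cyclic permutations of $(1,2,3)$. *)

From HB Require Import structures.
From mathcomp Require Import all_boot all_order all_algebra.
From mathcomp Require Import reals.
Set Implicit Arguments. Unset Strict Implicit. Unset Printing Implicit Defensive.
Import Order.TTheory GRing.Theory Num.Theory.
Local Open Scope ring_scope.

(* Algebraic model of the data on a smooth manifold M:
   - Vect : the real vector space of vector fields on M,
   - Form : the real vector space of 1-forms on M,
   - lie  : the Lie bracket of vector fields (R-bilinear, antisymmetric),
   - nab  : the affine connection acting on 1-forms, (X, b) |-> nabla_X b
            (R-bilinear).
   Sections of TM (+) T*M are pairs (X, eta) : Vect * Form. *)

Section GenGeom.
Variable R : realType.
Variables (Vect Form : lmodType R).

Definition lie_bracket_axioms (lie : Vect -> Vect -> Vect) : Prop :=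
  [/\ forall x y, lie x y = - lie y x,
      forall a x y z, lie (a *: x + y) z = a *: lie x z + lie y z
    & forall a x y z, lie z (a *: x + y) = a *: lie z x + lie z y].

Definition connection_axioms (nab : Vect -> Form -> Form) : Prop :=
  (forall a x y b, nab (a *: x + y) b = a *: nab x b + nab y b) /\
  (forall a x b c, nab x (a *: b + c) = a *: nab x b + nab x c).

Definition Sec := (Vect * Form)%type.

Definition nabla_bracket (lie : Vect -> Vect -> Vect)
    (nab : Vect -> Form -> Form) (s t : Sec) : Sec :=
  (lie s.1 t.1, nab s.1 t.2 - nab t.1 s.2).

Definition gen_almost_quaternionic (J1 J2 J3 : {linear Sec -> Sec}) : Prop :=
  [/\ forall s, J1 (J1 s) = - s,
      forall s, J2 (J2 s) = - s,
      forall s, J3 (J3 s) = - s,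
      forall s, J1 (J2 s) = - J2 (J1 s)
    & forall s, J3 s = J1 (J2 s)].

Variables (lie : Vect -> Vect -> Vect) (nab : Vect -> Form -> Form).
Local Notation br := (nabla_bracket lie nab).

Definition nabla_nijenhuis (K : Sec -> Sec) (s t : Sec) : Sec :=
  br (K s) (K t) - K (br (K s) t) - K (br s (K t)) + K (K (br s t)).

Definition nabla_integrable (K : Sec -> Sec) : Prop :=
  forall s t, nabla_nijenhuis K s t = 0.

Definition obata (J1 J2 J3 : Sec -> Sec) (s t : Sec) : Sec :=
  (12%:R : R)^-1 *:
    ( (J1 (br (J2 s) (J3 t) + br (J2 t) (J3 s))
     + J2 (br (J3 s) (J1 t) + br (J3 t) (J1 s))
     + J3 (br (J1 s) (J2 t) + br (J1 t) (J2 s)))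
    + 2%:R *: (J1 (br (J1 s) t + br (J1 t) s)
              + J2 (br (J2 s) t + br (J2 t) s)
              + J3 (br (J3 s) t + br (J3 t) s))
    - (nabla_nijenhuis J1 s t + nabla_nijenhuis J2 s t
       + nabla_nijenhuis J3 s t))
  + (2%:R : R)^-1 *: br s t.

Definition torsion_free (D : Sec -> Sec -> Sec) : Prop :=
  forall s t, D s t - D t s - br s t = 0.

End GenGeom.

From HB Require Import structures.
From mathcomp Require Import all_boot all_order all_algebra.
From mathcomp Require Import reals.
From mathcomp Require Import ring.
Set Implicit Arguments. Unset Strict Implicit. Unset Printing Implicit Defensive.
Import Order.TTheory GRing.Theory Num.Theory.
Local Open Scope ring_scope.

(* The bracket and every N_a are skew in (s, t), while the remaining terms of the
   Obata connection are symmetric; hence the torsion of D is -(N_1 + N_2 + N_3)/6.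
   Conversely, set Phi_K(B)(s, t) = B(Ks, Kt) - K B(Ks, t) - K B(s, Kt) - B(s, t).
   Since N_K is K-antilinear in each slot, Phi_{J_1}(N_1) = -4 N_1, and the
   quaternion relations give Phi_{J_1}(N_2 + N_3) = -2 N_1.  So a torsion-free D
   forces -6 N_1 = Phi_{J_1}(0) = 0, and likewise for J_2, J_3 by cyclic symmetry. *)

(* Linear identities in an R-module V are ring identities in the trivial extension
   R x V, where V is a square-zero ideal; this is how [lmod_ring] proves them. *)
Section TrivialExtension.
Variables (R : comPzRingType) (V : lmodType R).

Definition triv_ext : Type := (R * V)%type.
HB.instance Definition _ := GRing.Zmodule.on triv_ext.

Definition triv_ext_mul (x y : triv_ext) : triv_ext :=
  (x.1 * y.1, x.1 *: y.2 + y.1 *: x.2).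

Lemma triv_ext_mulA : associative triv_ext_mul.
Proof.
move=> [a u] [b v] [c w]; congr (_, _); rewrite /= ?mulrA //.
by rewrite !scalerDr !scalerA addrA [c * a]mulrC [c * b]mulrC.
Qed.

Lemma triv_ext_mulC : commutative triv_ext_mul.
Proof. by move=> [a u] [b v]; rewrite /triv_ext_mul /= mulrC addrC. Qed.

Lemma triv_ext_mul1 : left_id (1, 0) triv_ext_mul.
Proof. by move=> [a u]; rewrite /triv_ext_mul /= mul1r scale1r scaler0 addr0. Qed.

Lemma triv_ext_mulDl : left_distributive triv_ext_mul +%R.
Proof.
move=> [a u] [b v] [c w]; rewrite /triv_ext_mul /=; congr (_, _).
  exact: mulrDl.
by rewrite scalerDl scalerDr addrACA.
Qed.

HB.instance Definition _ := GRing.Zmodule_isComPzRing.Build triv_ext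
  triv_ext_mulA triv_ext_mulC triv_ext_mul1 triv_ext_mulDl.

Definition triv_ext_in (v : V) : triv_ext := (0, v).

Lemma triv_ext_in_inj : injective triv_ext_in.
Proof. exact: (can_inj (g := snd)). Qed.

Lemma triv_ext_inD u v : triv_ext_in (u + v) = triv_ext_in u + triv_ext_in v.
Proof. by rewrite /triv_ext_in; congr (_, _); rewrite addr0. Qed.

Lemma triv_ext_inN v : triv_ext_in (- v) = - triv_ext_in v.
Proof. by rewrite /triv_ext_in; congr (_, _); rewrite oppr0. Qed.

Lemma triv_ext_inMn v n : triv_ext_in (v *+ n) = triv_ext_in v *+ n.
Proof.
elim: n => [|n IHn]; first by rewrite !mulr0n.
by rewrite !mulrS triv_ext_inD IHn.
Qed.

End TrivialExtension.

Ltac lmod_ring :=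
  apply: triv_ext_in_inj;
  rewrite ?(triv_ext_inD, triv_ext_inN, triv_ext_inMn); ring.

Lemma additive_of_linear (R : pzRingType) (U W : lmodType R) (f : U -> W) :
    (forall a x y, f (a *: x + y) = a *: f x + f y) ->
  (forall x y, f (x + y) = f x + f y) /\ (forall x, f (- x) = - f x).
Proof.
move=> f_lin; have f0 : f 0 = 0.
  have := f_lin 1 0 0; rewrite !scale1r addr0 => /(congr1 (fun v => v - f 0)).
  by rewrite subrr addrK => <-.
split=> [x y | x]; first by have := f_lin 1 x y; rewrite !scale1r.
by have := f_lin (-1) x 0; rewrite f0 !addr0 !scaleN1r.
Qed.

Section GeneralizedBracket.
Variables (R : realType) (Vect Form : lmodType R).
Variables (lie : Vect -> Vect -> Vect) (nab : Vect -> Form -> Form).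
Hypotheses (lie_ax : lie_bracket_axioms lie) (nab_ax : connection_axioms nab).
Local Notation Sec := (Sec Vect Form).
Local Notation br := (nabla_bracket lie nab).
Local Notation N := (nabla_nijenhuis lie nab).

Lemma nabla_bracketC s t : br s t = - br t s.
Proof.
case: lie_ax => lieC _ _; rewrite /nabla_bracket lieC.
by congr (_, _); rewrite opprB.
Qed.

Lemma nabla_bracket_additivel t :
  (forall s s', br (s + s') t = br s t + br s' t) /\ (forall s, br (- s) t = - br s t).
Proof.
case: lie_ax => _ lie_linl _; case: nab_ax => nab_linl nab_linr.
have [lieDl lieNl] := @additive_of_linear _ _ _ (lie^~ t.1) (fun a x y => lie_linl a x y t.1).
have [nabDl nabNl] := @additive_of_linear _ _ _ (nab^~ t.2) (fun a x y => nab_linl a x y t.2).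
have [nabDr nabNr] := @additive_of_linear _ _ _ (nab t.1) (fun a x y => nab_linr a t.1 x y).
split=> [[x eta] [y xi] | [x eta]]; rewrite /nabla_bracket /=.
  by rewrite lieDl nabDl nabDr opprD addrACA.
by rewrite lieNl nabNl nabNr -opprD.
Qed.

Lemma nabla_bracketDl s s' t : br (s + s') t = br s t + br s' t.
Proof. by case: (nabla_bracket_additivel t). Qed.

Lemma nabla_bracketNl s t : br (- s) t = - br s t.
Proof. by case: (nabla_bracket_additivel t). Qed.

Lemma nabla_bracketDr s t t' : br s (t + t') = br s t + br s t'.
Proof. by rewrite nabla_bracketC nabla_bracketDl opprD -!nabla_bracketC. Qed.

Lemma nabla_bracketNr s t : br s (- t) = - br s t.
Proof. by rewrite nabla_bracketC nabla_bracketNl -nabla_bracketC. Qed.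

(* When [K \o K = -1], [nabla_nijenhuis K] is [nijenhuis_op K] applied to the bracket. *)
Definition nijenhuis_op (K : Sec -> Sec) (B : Sec -> Sec -> Sec) s t :=
  B (K s) (K t) - K (B (K s) t) - K (B s (K t)) - B s t.

Lemma nijenhuis_opD (K : {linear Sec -> Sec}) B B' s t :
  nijenhuis_op K (fun s t => B s t + B' s t) s t
  = nijenhuis_op K B s t + nijenhuis_op K B' s t.
Proof. rewrite /nijenhuis_op !(linearD K); lmod_ring. Qed.

Section Nijenhuis.
Variable K : {linear Sec -> Sec}.

Lemma nijenhuisC s t : N K t s = - N K s t.
Proof.
rewrite /nabla_nijenhuis !(nabla_bracketC t) !(nabla_bracketC (K t)) !(linearN K).
lmod_ring.
Qed.

Hypothesis KK : forall s, K (K s) = - s.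

Lemma nijenhuisKl s t : N K (K s) t = - K (N K s t).
Proof.
rewrite /nabla_nijenhuis ?(linearD K, linearN K, KK, nabla_bracketNl).
lmod_ring.
Qed.

Lemma nijenhuisKr s t : N K s (K t) = - K (N K s t).
Proof. by rewrite nijenhuisC nijenhuisKl nijenhuisC (linearN K) opprK. Qed.

Lemma nijenhuis_op_self s t : nijenhuis_op K (N K) s t = - (N K s t *+ 4).
Proof.
rewrite /nijenhuis_op !nijenhuisKl nijenhuisKr !(linearN K) !KK.
lmod_ring.
Qed.

End Nijenhuis.


Definition nijenhuis_sum (J1 J2 J3 : Sec -> Sec) s t := N J1 s t + N J2 s t + N J3 s t.

Section Quaternionic.
Variables I J K : {linear Sec -> Sec}.
Hypothesis quat : gen_almost_quaternionic I J K.

Lemma quat_II s : I (I s) = - s. Proof. by case: quat. Qed.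
Lemma quat_JJ s : J (J s) = - s. Proof. by case: quat. Qed.
Lemma quat_KK s : K (K s) = - s. Proof. by case: quat. Qed.
Lemma quat_IJ s : I (J s) = K s. Proof. by case: quat => _ _ _ _ ->. Qed.
Lemma quat_JI s : J (I s) = - K s. Proof. by case: quat => _ _ _ IJ ->; rewrite IJ opprK. Qed.
Lemma quat_IK s : I (K s) = - J s. Proof. by rewrite -quat_IJ quat_II. Qed.
Lemma quat_KI s : K (I s) = J s.
Proof. by rewrite -quat_IJ quat_JI (linearN I) quat_IK opprK. Qed.
Lemma quat_KJ s : K (J s) = - I s. Proof. by rewrite -quat_IJ quat_JJ (linearN I). Qed.
Lemma quat_JK s : J (K s) = I s.
Proof. by rewrite -quat_IJ quat_JI quat_KJ opprK. Qed.

Lemma gen_almost_quaternionic_cycle : gen_almost_quaternionic J K I.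
Proof. by split=> s; rewrite ?quat_JJ ?quat_KK ?quat_II ?quat_JK ?quat_KJ ?opprK. Qed.

Lemma nijenhuis_op_cross s t :
  nijenhuis_op I (N J) s t + nijenhuis_op I (N K) s t = - (N I s t *+ 2).
Proof.
rewrite /nijenhuis_op /nabla_nijenhuis.
rewrite ?(linearD I, linearD J, linearD K, linearN I, linearN J, linearN K,
  nabla_bracketDl, nabla_bracketDr, nabla_bracketNl, nabla_bracketNr,
  quat_II, quat_JJ, quat_KK, quat_IJ, quat_JI, quat_IK, quat_KI, quat_JK, quat_KJ).
lmod_ring.
Qed.

Lemma nijenhuis_op_sum s t :
  nijenhuis_op I (nijenhuis_sum I J K) s t = - (N I s t *+ 6).
Proof.
rewrite 2!nijenhuis_opD (nijenhuis_op_self quat_II) -addrA.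
by rewrite [X in _ + X = _]nijenhuis_op_cross -opprD -mulrnDr.
Qed.

Lemma nijenhuis_sum_eq0_integrable :
  (forall s t, nijenhuis_sum I J K s t = 0) -> nabla_integrable lie nab I.
Proof.
move=> sum0 s t; have := nijenhuis_op_sum s t.
rewrite /nijenhuis_op !sum0 (linear0 I) !subr0 => /esym/eqP.
by rewrite oppr_eq0 -scaler_nat scaler_eq0 pnatr_eq0 => /eqP.
Qed.

End Quaternionic.

Section Obata.
Variables J1 J2 J3 : {linear Sec -> Sec}.

Lemma nijenhuis_sumC s t : nijenhuis_sum J1 J2 J3 t s = - nijenhuis_sum J1 J2 J3 s t.
Proof.
by rewrite /nijenhuis_sum (nijenhuisC J1 s t) (nijenhuisC J2 s t) (nijenhuisC J3 s t) !opprD.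
Qed.

Lemma nijenhuis_sum_cycle s t : nijenhuis_sum J2 J3 J1 s t = nijenhuis_sum J1 J2 J3 s t.
Proof. by rewrite /nijenhuis_sum addrC addrA. Qed.

Definition obata_sym s t :=
  (J1 (br (J2 s) (J3 t) + br (J2 t) (J3 s))
   + J2 (br (J3 s) (J1 t) + br (J3 t) (J1 s))
   + J3 (br (J1 s) (J2 t) + br (J1 t) (J2 s)))
  + 2%:R *: (J1 (br (J1 s) t + br (J1 t) s)
            + J2 (br (J2 s) t + br (J2 t) s)
            + J3 (br (J3 s) t + br (J3 t) s)).

Lemma obata_symC s t : obata_sym t s = obata_sym s t.
Proof.
rewrite /obata_sym (addrC (br (J2 t) _)) (addrC (br (J3 t) _)) (addrC (br (J1 t) (J2 s))).
by rewrite (addrC (br (J1 t) s)) (addrC (br (J2 t) s)) (addrC (br (J3 t) s)).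
Qed.

Lemma obataE s t : obata lie nab J1 J2 J3 s t
  = 12%:R^-1 *: (obata_sym s t - nijenhuis_sum J1 J2 J3 s t) + 2%:R^-1 *: br s t.
Proof. by []. Qed.

Lemma obata_torsion s t :
  obata lie nab J1 J2 J3 s t - obata lie nab J1 J2 J3 t s - br s t
  = - (6%:R^-1 *: nijenhuis_sum J1 J2 J3 s t).
Proof.
have half : 2%:R^-1 *: br s t *+ 2 = br s t.
  by rewrite scalerMnl -mulr_natr mulVf ?pnatr_eq0 ?scale1r.
have sixth : 6%:R^-1 = 12%:R^-1 *+ 2 :> R by field.
rewrite !obataE obata_symC nijenhuis_sumC (nabla_bracketC t s).
rewrite -[X in _ - X = _]half sixth -scalerMnl !scalerDr !scalerN.
lmod_ring.
Qed.

Lemma obata_torsion_free_iff :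
  torsion_free lie nab (obata lie nab J1 J2 J3)
  <-> forall s t, nijenhuis_sum J1 J2 J3 s t = 0.
Proof.
split=> sum0 s t; move: (sum0 s t); rewrite obata_torsion.
  by move/eqP; rewrite oppr_eq0 scaler_eq0 invr_eq0 pnatr_eq0 => /eqP.
by move=> ->; rewrite scaler0 oppr0.
Qed.

End Obata.

Lemma quaternionic_integrable_iff (J1 J2 J3 : {linear Sec -> Sec}) :
    gen_almost_quaternionic J1 J2 J3 ->
  [/\ nabla_integrable lie nab J1, nabla_integrable lie nab J2
    & nabla_integrable lie nab J3]
  <-> forall s t, nijenhuis_sum J1 J2 J3 s t = 0.
Proof.
move=> quat1; have quat2 := gen_almost_quaternionic_cycle quat1.
have quat3 := gen_almost_quaternionic_cycle quat2.
split=> [[int1 int2 int3] s t | sum0].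
  by rewrite /nijenhuis_sum int1 int2 int3 !addr0.
split; [apply: (nijenhuis_sum_eq0_integrable quat1)
  | apply: (nijenhuis_sum_eq0_integrable quat2)
  | apply: (nijenhuis_sum_eq0_integrable quat3)] => s t.
- exact: sum0.
- by rewrite nijenhuis_sum_cycle.
- by rewrite 2!nijenhuis_sum_cycle.
Qed.

End GeneralizedBracket.

Theorem corollary5p9 (R : realType) (Vect Form : lmodType R)
  (lie : Vect -> Vect -> Vect) (nab : Vect -> Form -> Form)
  (J1 J2 J3 : {linear Sec Vect Form -> Sec Vect Form}) :
  lie_bracket_axioms lie ->
  connection_axioms nab ->
  gen_almost_quaternionic J1 J2 J3 ->
  ([/\ nabla_integrable lie nab J1, nabla_integrable lie nab J2
     & nabla_integrable lie nab J3]
   <-> torsion_free lie nab (obata lie nab J1 J2 J3)).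
Proof.
move=> lie_ax nab_ax quat.
apply: iff_trans (quaternionic_integrable_iff lie_ax nab_ax quat) _.
exact: iff_sym (obata_torsion_free_iff nab lie_ax J1 J2 J3).
Qed.
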